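(* Let $m, n$ be positive integers, let $f: V(H_{n,m}) \rightarrow \{-1,1\}$ be a function, and let $q = \frac{f(V(H_{n,m}))}{n}$ and $k = \lceil q \rceil$. Then $H_{n,m}$ can be decomposed into $n$ vertex-disjoint directed $m$-paths $P_1, \ldots, P_n$ with \[ f(V(P_j)) \in \begin{cases} \{k - 2, k\}, & \text{if } m \equiv k \pmod 2,\\ \{k-1, k+1\}, & \text{if } m \not\equiv k \pmod 2, \end{cases} \] for all $1 \le j \le n$.
   Context: For a set $Y$ of vertices, $f(Y)=\sum_{y\in Y}f(y)$. $H_{n,m}$ is the directed graph whose vertex set is the disjoint union of $V_1,\dots,V_m$ with $|V_i|=n$, and whose arc set is $\bigcup_{i=1}^{m-1}\{(v,w): v\in V_i, w\in V_{i+1}\}$. A directed $m$-path is a directed path with $m$ vertices. *)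

From mathcomp Require Import all_boot all_order all_algebra.
Set Implicit Arguments. Unset Strict Implicit. Unset Printing Implicit Defensive.
Import Order.TTheory GRing.Theory Num.Theory.

(* Vertices of H_{n,m}: pairs (i, x) meaning vertex x of layer V_{i+1}
   (layers indexed 0..m-1, each of size n). *)
Definition Hvert (n m : nat) : finType := ('I_m * 'I_n)%type.

Definition Harc (n m : nat) : rel (Hvert n m) :=
  fun v w => (nat_of_ord v.1).+1 == nat_of_ord w.1.

Definition is_dpath (n m k : nat) (p : seq (Hvert n m)) : bool :=
  [&& size p == k, uniq p & sorted (@Harc n m) p].

Definition dpath_decomposition (n m : nat) (P : 'I_n -> seq (Hvert n m)) : Prop :=
  [/\ forall j, is_dpath m (P j),
      forall j j' v, j != j' -> v \in P j -> v \notin P j'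
    & forall v : Hvert n m, exists j, v \in P j].

(* Identify every layer with 'I_n, let A_i be the set of vertices of layer i
   where f is 1 and let C = |A_0| + ... + |A_(m-1)|. Cut [0, C) into
   consecutive blocks of lengths |A_0|, |A_1|, ...; block i meets exactly
   |A_i| residues mod n, so some permutation of layer i sends the paths j
   whose residue is met by block i onto A_i. Path j then picks up as many
   ones as there are integers congruent to j in [0, C), namely C %/ n or
   C %/ n + 1, so every path sum is 2 (C %/ n) - m or 2 (C %/ n) - m + 2.
   Comparing with k = ceil ((2 C - n m) / n) gives the two cases. *)

From mathcomp Require Import all_boot all_order all_algebra perm.
From mathcomp Require Import zify.
Set Implicit Arguments. Unset Strict Implicit. Unset Printing Implicit Defensive.
Import Order.TTheory GRing.Theory Num.Theory.

Section SetMatching.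

Variable T : finType.

Definition enum_setC (A : {set T}) : seq T := enum A ++ enum (~: A).

Lemma size_enum_setC A : size (enum_setC A) = #|T|.
Proof. by rewrite size_cat -!cardE cardsC. Qed.

Lemma mem_enum_setC A x : x \in enum_setC A.
Proof. by rewrite mem_cat !mem_enum in_setC orbN. Qed.

Lemma uniq_enum_setC A : uniq (enum_setC A).
Proof.
rewrite cat_uniq !enum_uniq andbT /=.
by apply/hasPn => x; rewrite !mem_enum in_setC.
Qed.

Lemma index_enum_setC A x : (index x (enum_setC A) < #|A|)%N = (x \in A).
Proof.
rewrite index_cat mem_enum cardE; case: ifP => [xA | _]; first by rewrite index_mem mem_enum.
by rewrite ltnNge leq_addr.
Qed.

Lemma nth_enum_setC A x0 i : (i < #|T|)%N ->
  (nth x0 (enum_setC A) i \in A) = (i < #|A|)%N.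
Proof.
move=> lt_iT; rewrite nth_cat -cardE; case: ltnP => [lt_iA | le_Ai].
  by rewrite -mem_enum mem_nth -?cardE.
apply/negbTE; rewrite -in_setC -mem_enum mem_nth // -cardE.
by rewrite -(ltn_add2l #|A|) subnKC // cardsC.
Qed.

Definition set_match (A B : {set T}) (x : T) : T :=
  nth x (enum_setC B) (index x (enum_setC A)).

Lemma set_match_inj A B : injective (set_match A B).
Proof.
have lt_index x : (index x (enum_setC A) < size (enum_setC B))%N.
  by rewrite size_enum_setC -(size_enum_setC A) index_mem mem_enum_setC.
move=> x y; rewrite /set_match (set_nth_default y x (lt_index x)).
move/eqP; rewrite nth_uniq ?uniq_enum_setC // => /eqP.
exact: (index_inj x (mem_enum_setC A x) (mem_enum_setC A y)).
Qed.

Definition set_match_perm (A B : {set T}) : {perm T} := perm (@set_match_inj A B).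

Lemma set_match_permE (A B : {set T}) x : #|A| = #|B| ->
  (set_match_perm A B x \in B) = (x \in A).
Proof.
move=> eq_AB; rewrite permE /set_match nth_enum_setC -?index_enum_setC ?eq_AB //.
by rewrite -(size_enum_setC A) index_mem mem_enum_setC.
Qed.

End SetMatching.

Section ResidueWindow.

Variables (n : nat) (n_gt0 : (0 < n)%N).

Lemma modn_inj_iota c p : (p <= n)%N -> {in iota c p &, injective (modn^~ n)}.
Proof.
move=> le_pn x y; rewrite !mem_iota.
wlog le_xy : x y / (x <= y)%N => [hwlog|] xI yI eq_mod.
  by case: (leqP x y) => [|/ltnW] le; [|symmetry]; apply: hwlog.
have dvd_n : n %| y - x by rewrite -eqn_mod_dvd // eq_mod.
have [|pos_d] := posnP (y - x); first lia.
have := dvdn_leq pos_d dvd_n; lia.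
Qed.

Definition residue_window (c p : nat) : seq 'I_n :=
  [seq Ordinal (ltn_pmod x n_gt0) | x <- iota c p].

Lemma uniq_residue_window c p : (p <= n)%N -> uniq (residue_window c p).
Proof.
move=> le_pn; rewrite map_inj_in_uniq ?iota_uniq //.
by move=> x y xI yI /(congr1 val) /= /(modn_inj_iota le_pn xI yI).
Qed.

Lemma card_residue_window c p : (p <= n)%N -> #|[set j in residue_window c p]| = p.
Proof.
move=> le_pn; rewrite cardsE.
by move/card_uniqP: (uniq_residue_window c le_pn) => ->; rewrite size_map size_iota.
Qed.

Lemma mem_residue_window c p (j : 'I_n) : (p <= n)%N ->
  (j \in residue_window c p) = count (fun x => x %% n == j) (iota c p) :> nat.
Proof.
move=> le_pn; rewrite -count_uniq_mem ?uniq_residue_window // count_map.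
exact: eq_count.
Qed.

End ResidueWindow.

Lemma count_residue_iota n j C : (0 < n)%N -> (j < n)%N ->
  count (fun x => x %% n == j) (iota 0 C) = (C %/ n + (j < C %% n))%N.
Proof.
move=> n_gt0 lt_jn; elim: C => [|C IH]; first by rewrite div0n mod0n.
rewrite -addn1 iotaD count_cat IH /= addn0 add0n addn1 divnS // modnS.
have lt_Cn := ltn_pmod C n_gt0.
have [dvd_n_C1|] := boolP (n %| C.+1) => /=; last lia.
have : n %| (C %% n).+1.
  by rewrite -(dvdn_addr _ (dvdn_mull (C %/ n) (dvdnn n))) addnS -divn_eq.
move/dvdn_leq => /(_ isT); lia.
Qed.

Lemma count_iota_blocks (P : pred nat) (p : nat -> nat) L :
  (\sum_(t < L) count P (iota (\sum_(u < t) p u) (p t)))%N =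
  count P (iota 0 (\sum_(t < L) p t)).
Proof.
elim: L => [|L IH]; first by rewrite !big_ord0.
by rewrite !big_ord_recr /= IH iotaD count_cat.
Qed.

Lemma balanced_layer_perms n m (A : 'I_m -> {set 'I_n}) : (0 < n)%N ->
  let C := (\sum_(i < m) #|A i|)%N in
  exists sigma : 'I_m -> {perm 'I_n}, forall j : 'I_n,
    (\sum_(i < m) (sigma i j \in A i))%N = (C %/ n + (j < C %% n))%N.
Proof.
move=> n_gt0 C.
pose p t := if insub t is Some i then #|A i| else 0%N.
have p_ord (i : 'I_m) : p i = #|A i| by rewrite /p valK.
have le_An i : (#|A i| <= n)%N by have := max_card (A i); rewrite card_ord.
pose W (i : 'I_m) := [set j in residue_window n_gt0 (\sum_(t < i) p t) #|A i|].
exists (fun i => set_match_perm (W i) (A i)) => j.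
have -> : C = (\sum_(t < m) p t)%N by apply: eq_bigr => i _; rewrite p_ord.
rewrite -count_residue_iota // -count_iota_blocks; apply: eq_bigr => i _.
by rewrite set_match_permE ?card_residue_window // inE mem_residue_window // p_ord.
Qed.

Lemma iota_succ_sorted a b : sorted (fun x y => x.+1 == y) (iota a b).
Proof. by elim: b a => [|[|b] IH] a //=; rewrite eqxx; apply: (IH a.+1). Qed.

Section PermPaths.

Variables (n m : nat) (sigma : 'I_m -> {perm 'I_n}).

Definition perm_path (j : 'I_n) : seq (Hvert n m) :=
  [seq (i, sigma i j) | i <- enum 'I_m].

Lemma perm_path_decomposition : dpath_decomposition perm_path.
Proof.
split.
- move=> j; rewrite /is_dpath size_map size_enum_ord eqxx /=.
  rewrite map_inj_uniq ?enum_uniq; last by move=> i i' [].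
  by rewrite sorted_map; have := iota_succ_sorted 0 m; rewrite -val_enum_ord sorted_map.
- move=> j j' v neq_jj' /mapP[i _ ->]; apply/negP => /mapP[_ _ [<- /perm_inj eq_jj']].
  by rewrite eq_jj' eqxx in neq_jj'.
- move=> [i x]; exists (((sigma i)^-1)%g x); apply/mapP; exists i; first by rewrite mem_enum.
  by rewrite permKV.
Qed.

End PermPaths.

Lemma size_index_enum (T : finType) : size (index_enum T) = #|T|.
Proof. by rewrite cardT enumT [index_enum T]unlock. Qed.

Lemma sum_nat_pair (I J : finType) (P : pred (I * J)) :
  (\sum_(v : I * J) P v)%N = (\sum_(i : I) #|[set x | P (i, x)]|)%N.
Proof.
transitivity (\sum_(i : I) \sum_(x : J) P (i, x))%N.
  by rewrite pair_bigA; apply: eq_bigr => -[].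
apply: eq_bigr => i _.
by rewrite -sum1_card [RHS]big_mkcond; apply: eq_bigr => x _; rewrite inE; case: ifP.
Qed.

Local Open Scope ring_scope.

Lemma sum_pm1 (I : Type) (r : seq I) (f : I -> int) :
  (forall i, f i = 1 \/ f i = -1) ->
  \sum_(i <- r) f i = (\sum_(i <- r) (f i == 1))%N%:Z * 2 - (size r)%:Z.
Proof.
move=> f_pm1; elim: r => [|i r IH]; first by rewrite !big_nil.
by rewrite !big_cons IH /=; case: (f_pm1 i) => ->; lia.
Qed.

Lemma ceil_div_bounds (S : int) (n : nat) : (0 < n)%N ->
  n%:Z * (Num.ceil (S%:~R / n%:R : rat) - 1) < S
  <= n%:Z * Num.ceil (S%:~R / n%:R : rat).
Proof.
move=> n_gt0; have := ceil_itv (S%:~R / n%:R : rat).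
rewrite ltr_pdivlMr ?ler_pdivrMr ?ltr0n // pmulrn -!intrM ltr_int ler_int.
by rewrite ![n%:Z * _]mulrC.
Qed.

Lemma balanced_sum_parity (n m C j : nat) (k s : int) : (0 < n)%N ->
  k = Num.ceil (((C * 2)%:Z - (n * m)%:Z)%:~R / n%:R : rat) ->
  s = ((C %/ n + (j < C %% n)) * 2)%N%:Z - m%:Z ->
  if (m%:Z == k %[mod 2])%Z then (s == k - 2) || (s == k)
  else (s == k - 1) || (s == k + 1).
Proof.
move=> n_gt0 def_k ->.
have /andP[] := ceil_div_bounds ((C * 2)%:Z - (n * m)%:Z) n_gt0; rewrite -def_k.
have eq_C := divn_eq C n; have lt_b := ltn_pmod C n_gt0.
set a := (C %/ n)%N; set b := (C %% n)%N; set c := (j < b)%N; move=> lt_k le_k.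
(* [d = k - (2 a - m)] is the ceiling of [2 b / n], so it lies in [{0, 1, 2}]
   and vanishes only when [n] divides [C]. *)
set d : int := k - (a%:Z * 2 - m%:Z).
have lt_d : n%:Z * (d - 1) < b%:Z * 2 by rewrite /d; nia.
have le_d : b%:Z * 2 <= n%:Z * d by rewrite /d; nia.
have d_bounds : 0 <= d <= 2 by apply/andP; split; nia.
have c_d0 : d = 0 -> c = false.
  by move=> d0; rewrite /c (_ : b = 0%N) //; rewrite d0 in lt_d le_d; nia.
have -> : k = d + (a%:Z * 2 - m%:Z) by rewrite /d subrK.
clearbody d; clear -d_bounds c_d0.
case: ifP => parity_mk; lia.
Qed.

Theorem corollary4p5 (m n : nat) (hm : (0 < m)%N) (hn : (0 < n)%N)
    (f : Hvert n m -> int) (hf : forall v, f v = 1 \/ f v = -1) :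
  let q : rat := (\sum_(v : Hvert n m) f v)%:~R / n%:R in
  let k : int := Num.ceil q in
  exists P : 'I_n -> seq (Hvert n m),
    dpath_decomposition P /\
    forall j : 'I_n,
      let s := \sum_(v <- P j) f v in
      if (m%:Z == k %[mod 2])%Z then (s == k - 2) || (s == k)
      else (s == k - 1) || (s == k + 1).
Proof.
move=> q k.
pose A (i : 'I_m) : {set 'I_n} := [set x | f (i, x) == 1].
have [sigma balanced] := balanced_layer_perms A hn.
set C := (\sum_(i < m) #|A i|)%N in balanced.
have ones : (\sum_(v : Hvert n m) (f v == 1))%N = C by rewrite sum_nat_pair.
have total : \sum_(v : Hvert n m) f v = (C * 2)%N%:Z - (n * m)%N%:Z.
  by rewrite sum_pm1 // ones size_index_enum card_prod !card_ord mulnC.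
exists (perm_path sigma); split; first exact: perm_path_decomposition.
move=> j /=.
apply: (balanced_sum_parity (C := C) (j := j) hn); first by rewrite /k /q total.
rewrite sum_pm1 // big_map big_enum size_map size_enum_ord -balanced /=.
by rewrite PoszM; congr (Posz _ * _ - _); apply: eq_big => // i _; rewrite inE.
Qed.
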